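(* Let $B\ge1$, $C\ge1$ and $\theta,\tilde\theta\in[-B,B]^P$. Then for all $\mathbf{x}\in\mathbb{R}^p$, \[ |f_\theta(\mathbf{x})-f_{\tilde\theta}(\mathbf{x})|\le 4(2rB)^L(|\mathbf{x}|_1\vee1)\,|\theta-\tilde\theta|_\infty. \]
   Context: ReLU $\sigma(x)=\max(x,0)$ coordinatewise. For $L,r\in\mathbb{N}$, $g_\theta(\mathbf{x})=W^{(L+1)}\mathbf{x}^{(L)}+v^{(L+1)}$ with $\mathbf{x}^{(0)}=\mathbf{x}\in\mathbb{R}^p$, $\mathbf{x}^{(l)}=\sigma(W^{(l)}\mathbf{x}^{(l-1)}+v^{(l)})$ for $l=1,\dots,L$, where $W^{(1)}\in\mathbb{R}^{r\times p}$, $W^{(2)},\dots,W^{(L)}\in\mathbb{R}^{r\times r}$, $W^{(L+1)}\in\mathbb{R}^{1\times r}$, $v^{(1)},\dots,v^{(L)}\in\mathbb{R}^r$, $v^{(L+1)}\in\mathbb{R}$, all entries collected in $\theta\in\mathbb{R}^P$, $P=(p+1)r+(L-1)(r+1)r+r+1$. Clipped network $f_\theta=(-C)\vee(g_\theta\wedge C)$. $|\cdot|_1,|\cdot|_\infty$ are the $\ell^1$ and $\ell^\infty$ norms. *)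

From HB Require Import structures.
From mathcomp Require Import all_boot all_order all_algebra.
From mathcomp Require Import reals.
Set Implicit Arguments. Unset Strict Implicit. Unset Printing Implicit Defensive.
Import Order.TTheory GRing.Theory Num.Theory.
Local Open Scope ring_scope.

(* The parameter vector theta of a ReLU network of depth L and width r on R^p.
   W_in = W^(1), v_in = v^(1); W_hid k = W^(k+2), v_hid k = v^(k+2) for
   k = 0..L-2; W_out = W^(L+1), v_out = v^(L+1).  Its entries are exactly the
   P = (p+1)r + (L-1)(r+1)r + r + 1 coordinates of theta. *)
Record nnparam (R : pzRingType) (p r L : nat) := NNParam {
  W_in  : 'M[R]_(r, p);
  v_in  : 'cV[R]_r;
  W_hid : 'I_L.-1 -> 'M[R]_r;
  v_hid : 'I_L.-1 -> 'cV[R]_r;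
  W_out : 'rV[R]_r;
  v_out : R }.

Section NN.
Variable R : realType.

Definition relu_v (n : nat) (v : 'cV[R]_n) : 'cV[R]_n :=
  map_mx (fun a => Num.max a 0) v.

Definition net_g (p r L : nat) (th : nnparam R p r L) (x : 'cV[R]_p) : R :=
  let h1 := relu_v (W_in th *m x + v_in th) in
  let hL := foldl (fun h k => relu_v (W_hid th k *m h + v_hid th k)) h1
                  (enum 'I_L.-1) in
  (W_out th *m hL) 0 0 + v_out th.

Definition net_f (p r L : nat) (C : R) (th : nnparam R p r L) (x : 'cV[R]_p) : R :=
  Num.max (- C) (Num.min (net_g th x) C).

Definition norm1 (p : nat) (x : 'cV[R]_p) : R := \sum_(i < p) `|x i 0|.

Definition mxsup (m n : nat) (A : 'M[R]_(m, n)) : R :=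
  \big[Num.max/0]_(i < m) \big[Num.max/0]_(j < n) `|A i j|.

Definition param_sup (p r L : nat) (th : nnparam R p r L) : R :=
  Num.max (mxsup (W_in th))
 (Num.max (mxsup (v_in th))
 (Num.max (\big[Num.max/0]_(k < L.-1) mxsup (W_hid th k))
 (Num.max (\big[Num.max/0]_(k < L.-1) mxsup (v_hid th k))
 (Num.max (mxsup (W_out th)) `|v_out th|)))).

Definition param_sub (p r L : nat) (th th' : nnparam R p r L) : nnparam R p r L :=
  NNParam (W_in th - W_in th') (v_in th - v_in th')
          (fun k => W_hid th k - W_hid th' k) (fun k => v_hid th k - v_hid th' k)
          (W_out th - W_out th') (v_out th - v_out th').

Definition in_box (p r L : nat) (B : R) (th : nnparam R p r L) : Prop :=
  (forall i j, - B <= W_in th i j <= B) /\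
  (forall i j, - B <= v_in th i j <= B) /\
  (forall k i j, - B <= W_hid th k i j <= B) /\
  (forall k i j, - B <= v_hid th k i j <= B) /\
  (forall i j, - B <= W_out th i j <= B) /\
  - B <= v_out th <= B.

End NN.

From HB Require Import structures.
From mathcomp Require Import all_boot all_order all_algebra.
From mathcomp Require Import reals.
From mathcomp Require Import lra.

Set Implicit Arguments.
Unset Strict Implicit.
Unset Printing Implicit Defensive.

Import Order.TTheory GRing.Theory Num.Theory.
Local Open Scope ring_scope.

(* Measure activations in the entrywise sup norm |.|.  A layer
   h |-> relu (W h + v) with weights bounded by B maps |h| to at most
   r B |h| + B, and, ReLU being 1-Lipschitz, perturbing the weights by
   D = |theta - theta'|_inf and the input from h to h' moves the output by at
   most r D |h| + r B |h - h'| + D.  Induction over the layers gives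
   |h| <= 2 B m (2 r B)^(k-1) and |h - h'| <= 3 D m (2 r B)^(k-1) after k
   layers, with m = max(|x|_1, 1); the output layer contributes a last factor
   2 r B, and clipping is 1-Lipschitz. *)

Section ScalarLipschitz.
Variable R : realDomainType.
Implicit Types a b c d : R.

Lemma normr_relu a : `|Num.max a 0| <= `|a|.
Proof. by have [] := leP a 0; rewrite ?normr0. Qed.

Lemma dist_maxl c a b : `|Num.max c a - Num.max c b| <= `|a - b|.
Proof.
have := ler_norm (a - b); have := ler_norm (b - a); rewrite distrC.
by have [] := leP c a; have [] := leP c b; rewrite ler_norml; lra.
Qed.

Lemma dist_minr d a b : `|Num.min a d - Num.min b d| <= `|a - b|.
Proof.
have := ler_norm (a - b); have := ler_norm (b - a); rewrite distrC.
by have [] := leP a d; have [] := leP b d; rewrite ler_norml; lra.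
Qed.

Lemma dist_relu a b : `|Num.max a 0 - Num.max b 0| <= `|a - b|.
Proof. by rewrite ![Num.max _ 0]maxC dist_maxl. Qed.

Lemma dist_clip c d a b :
  `|Num.max c (Num.min a d) - Num.max c (Num.min b d)| <= `|a - b|.
Proof. exact: le_trans (dist_maxl _ _ _) (dist_minr _ _ _). Qed.

End ScalarLipschitz.

Section SupNorm.
Variable R : realType.

Lemma mxsup_ge0 m n (A : 'M[R]_(m, n)) : 0 <= mxsup A.
Proof. exact: bigmax_ge_id. Qed.

Lemma mxsup_ge m n (A : 'M[R]_(m, n)) i j : `|A i j| <= mxsup A.
Proof.
apply: le_trans (le_bigmax _ _ i).
exact: le_bigmax (fun j => `|A i j|) j.
Qed.

Lemma mxsup_ge_sub m n (A B : 'M[R]_(m, n)) i j : `|A i j - B i j| <= mxsup (A - B).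
Proof. by have := mxsup_ge (A - B) i j; rewrite !mxE. Qed.

Lemma mxsup_le m n (A : 'M[R]_(m, n)) b :
  0 <= b -> (forall i j, `|A i j| <= b) -> mxsup A <= b.
Proof. by move=> b_ge0 Ab; do 2![apply: bigmax_le => // ? _]. Qed.

Lemma mxsupD m n (A B : 'M[R]_(m, n)) : mxsup (A + B) <= mxsup A + mxsup B.
Proof.
apply: mxsup_le => [|i j]; first by rewrite addr_ge0 ?mxsup_ge0.
by rewrite mxE (le_trans (ler_normD _ _)) // lerD ?mxsup_ge.
Qed.

Lemma mxsup_mulmx m n k (A : 'M[R]_(m, n)) (B : 'M[R]_(n, k)) :
  mxsup (A *m B) <= n%:R * (mxsup A * mxsup B).
Proof.
apply: mxsup_le => [|i j]; first by rewrite !mulr_ge0 ?mxsup_ge0.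
rewrite mxE (le_trans (ler_norm_sum _ _ _)) //.
rewrite mulr_natl -[n in _ *+ n]card_ord -sumr_const; apply: ler_sum => l _.
by rewrite normrM ler_pM ?mxsup_ge.
Qed.

Lemma mxsup_mulmx_norm1 m n (A : 'M[R]_(m, n)) (x : 'cV[R]_n) :
  mxsup (A *m x) <= mxsup A * norm1 x.
Proof.
apply: mxsup_le => [|i j]; first by rewrite mulr_ge0 ?mxsup_ge0 ?sumr_ge0.
rewrite mxE /norm1 mulr_sumr (le_trans (ler_norm_sum _ _ _)) //.
by apply: ler_sum => l _; rewrite ord1 normrM ler_wpM2r ?mxsup_ge.
Qed.

Lemma mxsup_mulmx_sub m n k (A A' : 'M[R]_(m, n)) (B B' : 'M[R]_(n, k)) :
  mxsup (A *m B - A' *m B')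
    <= n%:R * (mxsup (A - A') * mxsup B) + n%:R * (mxsup A' * mxsup (B - B')).
Proof.
have -> : A *m B - A' *m B' = (A - A') *m B + A' *m (B - B').
  by rewrite mulmxBl mulmxBr addrA subrK.
by rewrite (le_trans (mxsupD _ _)) // lerD ?mxsup_mulmx.
Qed.

Lemma mxsup_relu n (u : 'cV[R]_n) : mxsup (relu_v u) <= mxsup u.
Proof.
apply: mxsup_le => [|i j]; first exact: mxsup_ge0.
by rewrite mxE (le_trans (normr_relu _)) ?mxsup_ge.
Qed.

Lemma mxsup_relu_sub n (u u' : 'cV[R]_n) :
  mxsup (relu_v u - relu_v u') <= mxsup (u - u').
Proof.
apply: mxsup_le => [|i j]; first exact: mxsup_ge0.
by rewrite !mxE (le_trans (dist_relu _ _)) ?mxsup_ge_sub.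
Qed.

End SupNorm.

Section ParameterNorm.
Variables (R : realType) (p r L : nat).
Implicit Types (th : nnparam R p r L) (B : R).

Lemma param_sup_W_in th : mxsup (W_in th) <= param_sup th.
Proof. by rewrite /param_sup !le_max lexx. Qed.

Lemma param_sup_v_in th : mxsup (v_in th) <= param_sup th.
Proof. by rewrite /param_sup !le_max lexx !orbT. Qed.

Lemma param_sup_W_hid th k : mxsup (W_hid th k) <= param_sup th.
Proof.
apply: le_trans (le_bigmax 0 (fun k => mxsup (W_hid th k)) k) _.
by rewrite /param_sup !le_max lexx !orbT.
Qed.

Lemma param_sup_v_hid th k : mxsup (v_hid th k) <= param_sup th.
Proof.
apply: le_trans (le_bigmax 0 (fun k => mxsup (v_hid th k)) k) _.
by rewrite /param_sup !le_max lexx !orbT.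
Qed.

Lemma param_sup_W_out th : mxsup (W_out th) <= param_sup th.
Proof. by rewrite /param_sup !le_max lexx !orbT. Qed.

Lemma param_sup_v_out th : `|v_out th| <= param_sup th.
Proof. by rewrite /param_sup !le_max lexx !orbT. Qed.

Lemma param_sup_ge0 th : 0 <= param_sup th.
Proof. exact: le_trans (param_sup_v_out th). Qed.

Lemma param_sup_le_box B th : 0 <= B -> in_box B th -> param_sup th <= B.
Proof.
move=> B_ge0 [W1 [v1 [Wh [vh [Wo vo]]]]].
have entry_le x : - B <= x <= B -> `|x| <= B by rewrite ler_norml.
rewrite /param_sup !ge_max (entry_le _ vo) andbT.
have box_mxsup m n (A : 'M[R]_(m, n)) :
    (forall i j, - B <= A i j <= B) -> mxsup A <= B.
  by move=> A_box; apply: mxsup_le => // i j; apply: entry_le.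
by apply/and5P; split; rewrite ?box_mxsup //; apply: bigmax_le => // k _;
  apply: box_mxsup.
Qed.

End ParameterNorm.

Section Layers.
Variable R : realType.

Definition relu_layer m n (W : 'M[R]_(n, m)) (v : 'cV[R]_n) (h : 'cV[R]_m) :=
  relu_v (W *m h + v).

Lemma mxsup_relu_layer m n (W : 'M[R]_(n, m)) v h :
  mxsup (relu_layer W v h) <= m%:R * (mxsup W * mxsup h) + mxsup v.
Proof.
apply: le_trans (mxsup_relu _) _.
by rewrite (le_trans (mxsupD _ _)) // lerD ?mxsup_mulmx.
Qed.

Lemma mxsup_relu_layer_sub m n (W W' : 'M[R]_(n, m)) v v' h h' :
  mxsup (relu_layer W v h - relu_layer W' v' h')
    <= m%:R * (mxsup (W - W') * mxsup h) + m%:R * (mxsup W' * mxsup (h - h'))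
       + mxsup (v - v').
Proof.
apply: le_trans (mxsup_relu_sub _ _) _.
rewrite opprD addrACA (le_trans (mxsupD _ _)) // lerD //.
exact: mxsup_mulmx_sub.
Qed.

End Layers.

Section Propagation.
Variables (R : realType) (n : nat) (B D m : R).
Hypotheses (n_ge1 : 1 <= n%:R :> R) (B_ge1 : 1 <= B) (D_ge0 : 0 <= D)
  (m_ge1 : 1 <= m).

Definition activation_bound (q : R) (h h' : 'cV[R]_n) :=
  mxsup h <= 2 * B * m * q /\ mxsup (h - h') <= 3 * D * m * q.

Lemma input_layer_bound p (W W' : 'M[R]_(n, p)) v v' x :
  norm1 x <= m -> mxsup W <= B -> mxsup v <= B ->
  mxsup (W - W') <= D -> mxsup (v - v') <= D ->
  activation_bound 1 (relu_layer W v x) (relu_layer W' v' x).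
Proof.
move=> x_le W_le v_le dW_le dv_le.
have x_ge0 : 0 <= norm1 x by apply: sumr_ge0.
have B_le : B <= B * m by rewrite ler_peMr // (le_trans ler01).
have D_le : D <= D * m by rewrite ler_peMr.
split.
- have Wx_le : mxsup W * norm1 x <= B * m by rewrite ler_pM ?mxsup_ge0.
  apply: le_trans (mxsup_relu _) _; apply: le_trans (mxsupD _ _) _.
  by apply: le_trans (lerD (mxsup_mulmx_norm1 _ _) v_le) _; lra.
- have dWx_le : mxsup (W *m x - W' *m x) <= D * m.
    by rewrite -mulmxBl (le_trans (mxsup_mulmx_norm1 _ _)) // ler_pM ?mxsup_ge0.
  apply: le_trans (mxsup_relu_sub _ _) _.
  rewrite opprD addrACA (le_trans (mxsupD _ _)) //.
  by apply: le_trans (lerD dWx_le dv_le) _; move: D_ge0; lra.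
Qed.

Lemma relu_layer_bound q (W W' : 'M[R]_n) v v' h h' :
  1 <= q -> mxsup W <= B -> mxsup W' <= B -> mxsup v <= B ->
  mxsup (W - W') <= D -> mxsup (v - v') <= D -> activation_bound q h h' ->
  activation_bound (q * (2 * n%:R * B)) (relu_layer W v h) (relu_layer W' v' h').
Proof.
move=> q_ge1 W_le W'_le v_le dW_le dv_le [h_le dh_le].
have B_ge0 : 0 <= B by apply: le_trans B_ge1.
have nBmq_ge1 : 1 <= n%:R * B * m * q by rewrite !mulr_ege1.
have B_le : B <= B * (n%:R * B * m * q) by rewrite ler_peMr.
have D_le : D <= D * (n%:R * B * m * q) by rewrite ler_peMr.
have scale := ler_wpM2l (ler0n R n).
split.
- have Wh_le : mxsup W * mxsup h <= B * (2 * B * m * q).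
    by rewrite ler_pM ?mxsup_ge0.
  apply: le_trans (mxsup_relu_layer _ _ _) _.
  by move: (scale _ _ Wh_le); lra.
- have dWh_le : mxsup (W - W') * mxsup h <= D * (2 * B * m * q).
    by rewrite ler_pM ?mxsup_ge0.
  have Wdh_le : mxsup W' * mxsup (h - h') <= B * (3 * D * m * q).
    by rewrite ler_pM ?mxsup_ge0.
  apply: le_trans (mxsup_relu_layer_sub _ _ _ _ _ _) _.
  by move: (scale _ _ dWh_le) (scale _ _ Wdh_le); lra.
Qed.

Lemma foldl_relu_layer_bound (I : Type) (Ws Ws' : I -> 'M[R]_n)
    (vs vs' : I -> 'cV[R]_n) :
  (forall k, mxsup (Ws k) <= B) -> (forall k, mxsup (Ws' k) <= B) ->
  (forall k, mxsup (vs k) <= B) -> (forall k, mxsup (Ws k - Ws' k) <= D) ->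
  (forall k, mxsup (vs k - vs' k) <= D) ->
  forall (s : seq I) q h h', 1 <= q -> activation_bound q h h' ->
  activation_bound (q * (2 * n%:R * B) ^+ size s)
    (foldl (fun h k => relu_layer (Ws k) (vs k) h) h s)
    (foldl (fun h k => relu_layer (Ws' k) (vs' k) h) h' s).
Proof.
move=> W_le W'_le v_le dW_le dv_le.
elim=> [|k s IHs] q h h' q_ge1 hh' /=; first by rewrite mulr1.
have K_ge1 : 1 <= 2 * n%:R * B by rewrite !mulr_ege1 // ler1n.
rewrite exprS mulrA; apply: IHs; first by rewrite mulr_ege1.
exact: relu_layer_bound.
Qed.

Lemma output_layer_bound q (w w' : 'rV[R]_n) b b' h h' :
  1 <= q -> mxsup w' <= B -> mxsup (w - w') <= D -> `|b - b'| <= D ->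
  activation_bound q h h' ->
  `|((w *m h) 0 0 + b) - ((w' *m h') 0 0 + b')|
    <= 3 * D * m * (q * (2 * n%:R * B)).
Proof.
move=> q_ge1 w'_le dw_le db_le [h_le dh_le].
have D_le : D <= D * (n%:R * B * m * q) by rewrite ler_peMr // !mulr_ege1.
have scale := ler_wpM2l (ler0n R n).
have dwh_le : mxsup (w - w') * mxsup h <= D * (2 * B * m * q).
  by rewrite ler_pM ?mxsup_ge0.
have wdh_le : mxsup w' * mxsup (h - h') <= B * (3 * D * m * q).
  by rewrite ler_pM ?mxsup_ge0.
rewrite opprD addrACA (le_trans (ler_normD _ _)) //.
apply: le_trans (lerD (mxsup_ge_sub _ _ 0 0) db_le) _.
apply: le_trans (lerD (mxsup_mulmx_sub _ _ _ _) (lexx D)) _.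
by move: (scale _ _ dwh_le) (scale _ _ wdh_le); lra.
Qed.

End Propagation.

Lemma dist_net_g (R : realType) p r L (B : R) (th th' : nnparam R p r L) x :
  (0 < r)%N -> (0 < L)%N -> 1 <= B -> in_box B th -> in_box B th' ->
  `|net_g th x - net_g th' x|
    <= 3 * param_sup (param_sub th th') * Num.max (norm1 x) 1 * (2 * r%:R * B) ^+ L.
Proof.
move=> r_gt0 L_gt0 B_ge1 box box'.
set D := param_sup (param_sub th th'); set m := Num.max (norm1 x) 1.
have r_ge1 : 1 <= r%:R :> R by rewrite ler1n.
have D_ge0 : 0 <= D := param_sup_ge0 _.
have m_ge1 : 1 <= m by rewrite le_max lexx orbT.
have x_le : norm1 x <= m by rewrite le_max lexx.
have B_ge0 : 0 <= B by apply: le_trans B_ge1.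
have sup_le := param_sup_le_box B_ge0 box.
have sup_le' := param_sup_le_box B_ge0 box'.
have input := input_layer_bound B_ge1 D_ge0 m_ge1 x_le
  (le_trans (param_sup_W_in th) sup_le) (le_trans (param_sup_v_in th) sup_le)
  (param_sup_W_in (param_sub th th')) (param_sup_v_in (param_sub th th')).
have hidden := foldl_relu_layer_bound r_ge1 B_ge1 D_ge0 m_ge1
  (fun k => le_trans (param_sup_W_hid th k) sup_le)
  (fun k => le_trans (param_sup_W_hid th' k) sup_le')
  (fun k => le_trans (param_sup_v_hid th k) sup_le)
  (param_sup_W_hid (param_sub th th')) (param_sup_v_hid (param_sub th th'))
  (enum 'I_L.-1) (lexx 1) input.
rewrite size_enum_ord mul1r in hidden.
have Kpow_ge1 : 1 <= (2 * r%:R * B) ^+ L.-1.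
  by rewrite exprn_ege1 // !mulr_ege1 // ler1n.
rewrite /net_g -[in X in _ <= X](prednK L_gt0) exprSr.
by apply: le_trans (output_layer_bound r_ge1 B_ge1 D_ge0 m_ge1 Kpow_ge1
  (le_trans (param_sup_W_out th') sup_le') (param_sup_W_out (param_sub th th'))
  (param_sup_v_out (param_sub th th')) hidden) _.
Qed.

Theorem lemma4p4 (R : realType) (p r L : nat) (B C : R)
  (th th' : nnparam R p r L) :
  (0 < p)%N -> (0 < r)%N -> (0 < L)%N ->
  1 <= B -> 1 <= C -> in_box B th -> in_box B th' ->
  forall x : 'cV[R]_p,
    `|net_f C th x - net_f C th' x|
      <= 4 * (2 * r%:R * B) ^+ L * Num.max (norm1 x) 1 * param_sup (param_sub th th').
Proof.
move=> _ r_gt0 L_gt0 B_ge1 _ box box' x.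
apply: le_trans (dist_clip _ _ _ _) _.
apply: le_trans (dist_net_g x r_gt0 L_gt0 B_ge1 box box') _.
have K_ge0 : 0 <= 2 * r%:R * B by rewrite !mulr_ge0 // (le_trans ler01).
have m_ge0 : 0 <= Num.max (norm1 x) 1 by rewrite le_max ler01 orbT.
have : 0 <= param_sup (param_sub th th') * Num.max (norm1 x) 1 * (2 * r%:R * B) ^+ L.
  by rewrite !mulr_ge0 ?exprn_ge0 ?param_sup_ge0.
lra.
Qed.
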